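(* Let $s\ge1$, let $n_1\le\dots\le n_s\le n$ be nonnegative integers, $\vec n=(n_1,\dots,n_s)$, let $r\ge1$ and let $\vec k^1,\dots,\vec k^r$ be vectors of $s$ nonnegative integers, $\vec k^j=(k^j_1,\dots,k^j_s)$. There are real numbers $f_\pi$, $\pi\in\Theta_r$, depending only on $\pi$, $(\vec k^j)_j$ and $\vec n$, such that for every probability measure $\rho$ on some $\mathbb{Y}_m$ and every $\sigma_1,\dots,\sigma_r\in S_\infty$ with pairwise disjoint supports, $$\kappa^{F[\vec k,\vec n]}_{\rho,r}(\sigma_1,\dots,\sigma_r)=\sum_{\pi\in\Theta_r}f_\pi\,\kappa_{\rho,|\pi|}\Big(\prod_{j\in B_1}\sigma_j,\dots,\prod_{j\in B_{|\pi|}}\sigma_j\Big),$$ where $\pi=\{B_1,\dots,B_{|\pi|}\}$, and $f_\pi=O(n^\beta)$ as $n\to\infty$ with $\beta=\sum_{j=1}^r\sum_{i=1}^sk^j_i+|\pi|-r$.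
   Context: $\Theta_r$ is the lattice of set partitions of $\{1,\dots,r\}$, $|\pi|$ the number of blocks. Generalized falling factorial: for $\vec n=(n_1\le\dots\le n_s)$ and $\vec k=(k_1,\dots,k_s)$, $(\vec n\downarrow\vec k)=\prod_{i=1}^s(n_i-\sum_{j<i}k_j)_{k_i}$ where $(y)_k=y(y-1)\cdots(y-k+1)$. For a probability measure $\rho$ on $\mathbb{Y}_m$, $M_\rho(\sigma)=\sum_{\lambda\in\mathbb{Y}_m}\rho(\lambda)\chi_\lambda(\tau)/\dim\lambda$ if $\sigma\in S_\infty$ is conjugate to $\tau\in S_m$, else $0$. Permutation-cumulant (for permutations with disjoint supports): $\kappa_{\rho,r}(\tau_1,\dots,\tau_r)=\sum_{\pi\in\Theta_r}(-1)^{|\pi|-1}(|\pi|-1)!\prod_{B\in\pi}M_\rho(\prod_{j\in B}\tau_j)$. Falling cumulant: $\kappa^{F[\vec k,\vec n]}_{\rho,r}(\sigma_1,\dots,\sigma_r)=\sum_{\pi\in\Theta_r}(-1)^{|\pi|-1}(|\pi|-1)!\prod_{B\in\pi}\big(\vec n\downarrow\sum_{j\in B}\vec k^j\big)M_\rho(\prod_{j\in B}\sigma_j)$. *)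

From HB Require Import structures.
From mathcomp Require Import all_boot all_order all_algebra all_fingroup all_solvable all_field all_character.
From Stdlib Require Import ClassicalEpsilon.
Set Implicit Arguments. Unset Strict Implicit. Unset Printing Implicit Defensive.
Import Order.TTheory GRing.Theory Num.Theory.
Local Open Scope ring_scope.

(* Elements of S_infinity are represented as functions nat -> nat which are
   bijective and move only finitely many points. *)
Definition finitary (f : nat -> nat) : Prop :=
  bijective f /\ exists N : nat, forall x, (N <= x)%N -> f x = x.

Definition in_supp (f : nat -> nat) (x : nat) : Prop := f x <> x.

Definition ext_perm (m : nat) (t : 'S_m) (x : nat) : nat :=
  match ltnP x m with
  | LtnNotGeq h => val (t (Ordinal h))
  | _ => x
  end.

Definition conj_to (m : nat) (f : nat -> nat) (t : 'S_m) : Prop :=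
  exists g : nat -> nat, finitary g /\ forall x, f (g x) = g (ext_perm t x).

Definition SymG (m : nat) := [set: 'S_m]%G.

(* probability measures on the irreducible characters of S_m (= Y_m) *)
Definition is_prob (m : nat) (rho : Iirr (SymG m) -> algC) : Prop :=
  (forall i, 0 <= rho i) /\ \sum_i rho i = 1.

Definition Mrho (m : nat) (rho : Iirr (SymG m) -> algC) (f : nat -> nat) : algC :=
  match excluded_middle_informative (exists t : 'S_m, conj_to f t) with
  | left _ =>
      let t := epsilon (inhabits (1%g : 'S_m)) (fun t => conj_to f t) in
      \sum_i rho i * ('chi[SymG m]_i t / 'chi[SymG m]_i 1%g)
  | right _ => 0
  end.

Definition prodB (r : nat) (sigma : 'I_r -> nat -> nat) (B : {set 'I_r}) : nat -> nat :=
  foldr (fun j g => sigma j \o g) id (enum B).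

Definition Theta (r : nat) (pi : {set {set 'I_r}}) : bool := partition pi [set: 'I_r].

Definition cum (r : nat) (u : {set 'I_r} -> algC) : algC :=
  \sum_(pi : {set {set 'I_r}} | Theta pi)
     (-1) ^+ (#|pi|.-1) * (#|pi|.-1)`!%:R * \prod_(B in pi) u B.

Definition kappa (m : nat) (rho : Iirr (SymG m) -> algC) (p : nat)
  (tau : 'I_p -> nat -> nat) : algC :=
  cum (fun B => Mrho rho (prodB tau B)).

Definition ffact (y : algC) (k : nat) : algC := \prod_(l < k) (y - l%:R).

Definition gffact (s : nat) (nv K : 'I_s -> nat) : algC :=
  \prod_(i < s) ffact ((nv i)%:R - (\sum_(j < s | (j < i)%N) K j)%:R) (K i).

Definition falling_kappa (s r : nat) (k : 'I_r -> 'I_s -> nat) (nv : 'I_s -> nat)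
  (m : nat) (rho : Iirr (SymG m) -> algC) (sigma : 'I_r -> nat -> nat) : algC :=
  cum (fun B => gffact nv (fun i => \sum_(j in B) k j i) * Mrho rho (prodB sigma B)).

Definition kappa_blocks (r : nat) (m : nat) (rho : Iirr (SymG m) -> algC)
  (sigma : 'I_r -> nat -> nat) (pi : {set {set 'I_r}}) : algC :=
  @kappa m rho #|pi| (fun i => prodB sigma (@enum_val _ (mem pi) i)).

Definition nondecr (s : nat) (nv : 'I_s -> nat) : Prop :=
  forall i j : 'I_s, (i <= j)%N -> (nv i <= nv j)%N.

From HB Require Import structures.
From mathcomp Require Import all_boot all_order all_algebra all_fingroup all_solvable all_field all_character.
From mathcomp Require Import zify.
From Stdlib Require Import FunctionalExtensionality.
Set Implicit Arguments. Unset Strict Implicit. Unset Printing Implicit Defensive.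
Import Order.TTheory GRing.Theory Num.Theory.
Local Open Scope ring_scope.

(* Write each generalized falling factorial (n ↓ K) as a product over atoms,
   one for each unit of K, ordered by level, of the factors
   n_i - #(earlier atoms of the same block).  Expanding the product over the
   blocks of pi, every atom either picks n_i (a root) or the -1 of an earlier
   atom (an edge), and such a choice F is admissible exactly when pi is coarser
   than the partition sigma_F generated by its edges.  Summing the cumulant
   coefficients over the pi coarser than sigma_F yields the permutation cumulant
   of the products over the blocks of sigma_F, because a product of
   permutations with disjoint supports over a union of blocks is the product of
   the block products.  So f_pi is the total weight of the F with sigma_F = pi.
   A nonzero weight is at most n^#roots, while #roots + #edges <= sum k and
   r <= |pi| + #edges, whence #roots <= beta. *)

Definition mobius_top (n : nat) : algC := (-1) ^+ n.-1 * (n.-1)`!%:R.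

Lemma cumE (r : nat) (u : {set 'I_r} -> algC) :
  cum u = \sum_(pi | Theta pi) mobius_top #|pi| * \prod_(B in pi) u B.
Proof. by []. Qed.

Definition refines (T : finType) (sg pi : {set {set T}}) : bool :=
  [forall B in sg, [exists C in pi, B \subset C]].

Section Coarsening.
Variables (r : nat) (sg : {set {set 'I_r}}).
Hypothesis sg_part : Theta sg.
Local Notation p := #|sg|.

Definition block (i : 'I_p) : {set 'I_r} := @enum_val _ (mem sg) i.
Definition merge (D : {set 'I_p}) : {set 'I_r} := \bigcup_(i in D) block i.
Definition blocks_within (C : {set 'I_r}) : {set 'I_p} := [set i | block i \subset C].

Lemma block_mem i : block i \in sg.
Proof. exact: enum_valP. Qed.

Lemma block_inj : injective block.
Proof. exact: enum_val_inj. Qed.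

Lemma block_neq0 i : block i != set0.
Proof. exact: (partition_neq0 sg_part (block_mem i)). Qed.

Lemma block_disjoint i j x : x \in block i -> x \in block j -> i = j.
Proof.
move=> xi xj; apply: block_inj.
have tI := partition_trivIset sg_part.
by rewrite -(def_pblock tI (block_mem i) xi) (def_pblock tI (block_mem j) xj).
Qed.

Lemma block_cover x : exists i, x \in block i.
Proof.
have xc : x \in cover sg by rewrite (cover_partition sg_part) inE.
have Pb := pblock_mem xc.
exists (enum_rank_in Pb (pblock sg x)).
by rewrite /block enum_rankK_in // mem_pblock.
Qed.

Lemma mergeK : cancel merge blocks_within.
Proof.
move=> D; apply/setP=> i; rewrite inE; apply/idP/idP; last first.
  by move=> iD; apply: (bigcup_max i).
move=> sub; have /set0Pn[x xi] := block_neq0 i.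
have /bigcupP[j jD xj] := subsetP sub x xi.
by rewrite (block_disjoint xi xj).
Qed.

Lemma merge_inj : injective merge.
Proof. exact: can_inj mergeK. Qed.

Lemma blocks_withinK pi C : Theta pi -> refines sg pi -> C \in pi ->
  merge (blocks_within C) = C.
Proof.
move=> pi_part sg_pi Cpi; apply/setP=> x; apply/idP/idP.
  by move=> /bigcupP[i]; rewrite inE => /subsetP; apply.
move=> xC; have [i xi] := block_cover x.
apply/bigcupP; exists i => //; rewrite inE.
have /existsP[C' /andP[C'pi sub]] := forall_inP sg_pi _ (block_mem i).
have tI := partition_trivIset pi_part.
by rewrite -(def_pblock tI Cpi xC) (def_pblock tI C'pi (subsetP sub x xi)).
Qed.

Definition merge_partition (rho : {set {set 'I_p}}) := merge @: rho.
Definition split_partition (pi : {set {set 'I_r}}) := blocks_within @: pi.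

Lemma merge_partitionK : cancel merge_partition split_partition.
Proof.
move=> rho; rewrite /split_partition /merge_partition -imset_comp.
by rewrite (eq_imset _ mergeK) imset_id.
Qed.

Lemma split_partitionK pi : Theta pi -> refines sg pi ->
  merge_partition (split_partition pi) = pi.
Proof.
move=> pi_part sg_pi; rewrite /split_partition /merge_partition -imset_comp.
by rewrite (eq_in_imset (fun C => blocks_withinK pi_part sg_pi)) imset_id.
Qed.

Lemma merge_partition_Theta rho : Theta rho ->
  Theta (merge_partition rho) && refines sg (merge_partition rho).
Proof.
move=> rho_part; have tI := partition_trivIset rho_part.
have rho_cover i : i \in cover rho by rewrite (cover_partition rho_part) inE.
apply/andP; split; last first.
  apply/forall_inP=> B Bsg; apply/existsP.
  pose i := enum_rank_in Bsg B.
  have <- : block i = B by rewrite /block enum_rankK_in.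
  exists (merge (pblock rho i)); rewrite imset_f ?pblock_mem //=.
  by apply: (bigcup_max i); rewrite // mem_pblock.
apply/and3P; split.
- apply/eqP/setP=> x; rewrite inE; have [i xi] := block_cover x.
  apply/bigcupP; exists (merge (pblock rho i)); first by rewrite imset_f ?pblock_mem.
  by apply/bigcupP; exists i; rewrite // mem_pblock.
- apply/trivIsetP=> _ _ /imsetP[D Din ->] /imsetP[D' D'in ->] neq.
  apply/pred0P=> x /=; apply/negbTE/negP => /andP[/bigcupP[i iD xi] /bigcupP[j jD xj]].
  move: neq; rewrite -(block_disjoint xi xj) in jD.
  by rewrite -(def_pblock tI Din iD) -(def_pblock tI D'in jD) eqxx.
- apply/negP=> /imsetP[D Din D0].
  have /set0Pn[i iD] := partition_neq0 rho_part Din.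
  have /set0Pn[x xi] := block_neq0 i.
  have : x \in merge D by apply/bigcupP; exists i.
  by rewrite -D0 inE.
Qed.

Lemma Theta_merge_partition rho : Theta (merge_partition rho) -> Theta rho.
Proof.
move=> mrho_part; have tI := partition_trivIset mrho_part.
apply/and3P; split.
- apply/eqP/setP=> i; rewrite inE.
  have /set0Pn[x xi] := block_neq0 i.
  have : x \in cover (merge_partition rho) by rewrite (cover_partition mrho_part) inE.
  move=> /bigcupP[_ /imsetP[D Din ->] /bigcupP[j jD xj]].
  by rewrite (block_disjoint xi xj); apply/bigcupP; exists D.
- apply/trivIsetP=> D D' Din D'in neq.
  apply/pred0P=> i /=; apply/negbTE/negP => /andP[iD iD'].
  have /set0Pn[x xi] := block_neq0 i.
  have xD : x \in merge D by apply/bigcupP; exists i.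
  have xD' : x \in merge D' by apply/bigcupP; exists i.
  have := def_pblock tI (imset_f merge Din) xD.
  rewrite (def_pblock tI (imset_f merge D'in) xD') => /merge_inj DD'.
  by rewrite DD' eqxx in neq.
- have merge0 : merge set0 = set0 by rewrite /merge big_set0.
  apply: contraFN (partition0 mrho_part) => rho0.
  by rewrite -merge0 imset_f.
Qed.

Lemma cum_merge (u : {set 'I_r} -> algC) :
  cum (fun D : {set 'I_p} => u (merge D)) =
  \sum_(pi | Theta pi && refines sg pi) mobius_top #|pi| * \prod_(C in pi) u C.
Proof.
rewrite (reindex_onto merge_partition split_partition); last first.
  by move=> pi /andP[]; apply: split_partitionK.
rewrite cumE; apply: eq_big => [rho|rho _].
  rewrite merge_partitionK eqxx andbT; apply/idP/idP; first exact: merge_partition_Theta.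
  by case/andP=> /Theta_merge_partition.
rewrite /merge_partition card_imset; last exact: merge_inj.
by rewrite big_imset //; move=> D D' _ _; apply: merge_inj.
Qed.

End Coarsening.

Definition disjoint_supports (I : eqType) (sigma : I -> nat -> nat) : Prop :=
  forall i j x, i != j -> sigma i x != x -> sigma j x = x.

Definition support_stable (I : Type) (sigma : I -> nat -> nat) : Prop :=
  forall i x, sigma i x != x -> sigma i (sigma i x) != sigma i x.

Section DisjointProducts.
Variables (I : eqType) (sigma : I -> nat -> nat).
Hypotheses (sigma_disj : disjoint_supports sigma) (sigma_stable : support_stable sigma).
Local Notation prod_seq := (foldr (fun j g => sigma j \o g) id).

Lemma prod_seq_fixed (l : seq I) x : (forall j, j \in l -> sigma j x = x) ->
  prod_seq l x = x.
Proof.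
elim: l => //= a l IHl fixed.
by rewrite IHl ?fixed ?mem_head // => j jl; apply: fixed; rewrite inE jl orbT.
Qed.

Lemma prod_seq_moved (l : seq I) x j : uniq l -> j \in l -> sigma j x != x ->
  prod_seq l x = sigma j x.
Proof.
elim: l => //= a l IHl /andP[al ul]; rewrite inE => /orP[/eqP ->|jl] moved /=.
  rewrite prod_seq_fixed // => i il; apply: (sigma_disj (i := a)) => //.
  by apply: contraNneq al => ->.
rewrite IHl //; apply: (sigma_disj (i := j)); last exact: sigma_stable.
by apply: contraNneq al => <-.
Qed.
End DisjointProducts.

Lemma prodB_fixed r (sigma : 'I_r -> nat -> nat) (B : {set 'I_r}) x :
  (forall j, j \in B -> sigma j x = x) -> prodB sigma B x = x.
Proof. by move=> fixed; apply: prod_seq_fixed => j; rewrite mem_enum; apply: fixed. Qed.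

Lemma prodB_moved r (sigma : 'I_r -> nat -> nat) (B : {set 'I_r}) x j :
  disjoint_supports sigma -> support_stable sigma ->
  j \in B -> sigma j x != x -> prodB sigma B x = sigma j x.
Proof.
by move=> disj stable jB moved; apply: prod_seq_moved; rewrite ?enum_uniq ?mem_enum.
Qed.

Section BlockProducts.
Variables (r : nat) (sg : {set {set 'I_r}}) (sigma : 'I_r -> nat -> nat).
Hypothesis sg_part : Theta sg.
Hypotheses (sigma_disj : disjoint_supports sigma) (sigma_stable : support_stable sigma).

Definition block_prod (i : 'I_#|sg|) : nat -> nat := prodB sigma (block i).

Lemma block_prod_moved i x : block_prod i x != x ->
  exists2 j, j \in block i & sigma j x != x /\ block_prod i x = sigma j x.
Proof.
move=> moved; have [/exists_inP[j jB mj]|/exists_inPn fixed] :=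
  boolP [exists j in block i, sigma j x != x].
  by exists j => //; split; last exact: prodB_moved.
move: moved; rewrite /block_prod prodB_fixed ?eqxx // => j jB.
by apply/eqP; rewrite -[_ == _]negbK fixed.
Qed.

Lemma block_prod_disjoint : disjoint_supports block_prod.
Proof.
move=> i i' x neq /block_prod_moved[j jB [mj _]].
rewrite /block_prod prodB_fixed // => j' j'B.
apply: (sigma_disj (i := j)) => //; apply: contraNneq neq => jj'.
by rewrite jj' in jB; rewrite (block_disjoint sg_part jB j'B).
Qed.

Lemma block_prod_stable : support_stable block_prod.
Proof.
move=> i x /block_prod_moved[j jB [mj ->]].
rewrite /block_prod (prodB_moved sigma_disj sigma_stable jB (sigma_stable mj)).
exact: sigma_stable.
Qed.

Lemma prodB_block_prod D : prodB block_prod D =1 prodB sigma (merge D).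
Proof.
move=> x; have [/exists_inP[j /bigcupP[i iD ji] mj]|/exists_inPn fixed] :=
  boolP [exists j in merge D, sigma j x != x].
  have bi : block_prod i x = sigma j x by apply: prodB_moved.
  rewrite (prodB_moved sigma_disj sigma_stable _ mj); last by apply/bigcupP; exists i.
  by rewrite -bi (prodB_moved block_prod_disjoint block_prod_stable iD) ?bi.
have fx j : j \in merge D -> sigma j x = x.
  by move=> jD; apply/eqP; rewrite -[_ == _]negbK fixed.
rewrite (prodB_fixed fx) prodB_fixed // => i iD; rewrite /block_prod prodB_fixed // => j ji.
by apply: fx; apply/bigcupP; exists i.
Qed.

Lemma kappa_blocks_refines m (rho : Iirr (SymG m) -> algC) :
  kappa_blocks rho sigma sg =
  \sum_(pi | Theta pi && refines sg pi)
     mobius_top #|pi| * \prod_(C in pi) Mrho rho (prodB sigma C).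
Proof.
rewrite /kappa_blocks /kappa -(cum_merge sg_part); congr cum.
apply: functional_extensionality => D; congr Mrho.
exact: functional_extensionality (prodB_block_prod D).
Qed.
End BlockProducts.

Lemma sum_option (V : nmodType) (T : finType) (h : option T -> V) :
  \sum_(c : option T) h c = h None + \sum_(b : T) h (Some b).
Proof.
rewrite (bigD1 None) //=; congr (_ + _).
rewrite (reindex_omap Some id) //=; last by case.
by apply: eq_bigl => b /=; rewrite eqxx.
Qed.

Lemma prod_rank (R : comPzSemiRingType) (T : finType) (rk : T -> nat) (h : nat -> R) :
  injective rk -> forall Y : {set T},
  \prod_(a in Y) h #|[set b in Y | (rk b < rk a)%N]| = \prod_(l < #|Y|) h l.
Proof.
move=> rk_inj Y; have [n] := ubnP #|Y|; elim: n Y => // n IHn Y.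
rewrite ltnS => Yn.
have [->|[a0 a0Y]] := set_0Vmem Y; first by rewrite big_set0 cards0 big_ord0.
have [am amY am_max] : exists2 am, am \in Y & forall b, b \in Y -> (rk b <= rk am)%N.
  by exists [arg max_(a > a0 in Y) rk a]; case: arg_maxnP.
have below_am : [set b in Y | (rk b < rk am)%N] = Y :\ am.
  apply/setP=> b; rewrite !inE; have [->|neq] /= := eqVneq b am; first by rewrite ltnn andbF.
  have [bY|] //= := boolP (b \in Y); rewrite ltn_neqAle am_max // andbT.
  by apply: contra_neq neq => /rk_inj.
have cardY : #|Y| = #|Y :\ am|.+1 by rewrite (cardsD1 am Y) amY.
rewrite (bigD1 am) //= cardY big_ord_recr /= mulrC below_am; congr (_ * _).
rewrite -IHn; last by rewrite -ltnS -cardY.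
apply: eq_big => [b|b /andP[bY neq]]; first by rewrite !inE andbC.
congr h; apply: eq_card => c; rewrite !inE.
by have [->|] //= := eqVneq c am; rewrite ltnNge am_max // andbF.
Qed.

Lemma prod_nat_bool (R : comPzSemiRingType) (T : finType) (P : pred T) :
  \prod_(a : T) ((P a)%:R : R) = [forall a, P a]%:R.
Proof.
have [/forallP allP|/forallPn[a Pa]] := boolP [forall a, P a].
  by apply: big1 => a _; rewrite allP.
by rewrite (bigD1 a) //= (negbTE Pa) mul0r.
Qed.

Lemma pblock_eq (T : finType) (P : {set {set T}}) B x :
  partition P [set: T] -> B \in P -> (pblock P x == B) = (x \in B).
Proof.
move=> partP BP; apply/eqP/idP => [<-|xB]; last first.
  exact: def_pblock (partition_trivIset partP) BP xB.
by rewrite mem_pblock (cover_partition partP) inE.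
Qed.

Section Labels.
Variable T : finType.

(* [labels E] merges, edge after edge, the classes of the two endpoints; its
   fibres form the partition generated by the edge list E. *)
Definition relabel (e : T * T) (lab : T -> T) : T -> T :=
  fun x => if lab x == lab e.2 then lab e.1 else lab x.
Definition labels (E : seq (T * T)) : T -> T := foldr relabel id E.

Lemma card_preim_partition (T' : finType) (f : T -> T') :
  #|preim_partition f [set: T]| = #|f @: [set: T]|.
Proof.
have -> : preim_partition f [set: T] = (fun v => [set y | f y == v]) @: (f @: [set: T]).
  rewrite /preim_partition /equivalence_partition -imset_comp.
  by apply: eq_imset => x /=; apply/setP => y; rewrite !inE eq_sym.
apply: card_in_imset => _ _ /imsetP[x _ ->] /imsetP[x' _ ->] /setP eq_xx'.
by have := eq_xx' x; rewrite !inE eqxx => /esym/eqP.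
Qed.

Lemma card_labels E : (#|T| <= #|labels E @: [set: T]| + size E)%N.
Proof.
elim: E => [|e E IHE] /=; first by rewrite addn0 card_imset ?cardsT.
apply: (leq_trans IHE); rewrite addnS -addSn leq_add2r.
set lab := labels E.
have sub : (lab @: [set: T]) :\ lab e.2 \subset relabel e lab @: [set: T].
  apply/subsetP=> y; rewrite !inE => /andP[neq /imsetP[x _ yx]]; subst y.
  by apply/imsetP; exists x => //; rewrite /relabel (negbTE neq).
rewrite (cardsD1 (lab e.2) (lab @: _)); have := subset_leq_card sub.
by case: (_ \in _) => /=; lia.
Qed.

Lemma labels_edge E e : e \in E -> labels E e.1 = labels E e.2.
Proof.
elim: E => [|e' E IHE] //=; rewrite inE /relabel => /orP[/eqP ->|eE].
  by rewrite eqxx; case: eqP.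
by rewrite (IHE eE).
Qed.

Lemma pblock_labels (pi : {set {set T}}) E :
  all (fun e => pblock pi e.1 == pblock pi e.2) E ->
  forall x, pblock pi (labels E x) = pblock pi x.
Proof.
elim: E => [|e E IHE] //= /andP[/eqP e12 allE] x; rewrite /relabel.
case: eqP => [eq_x2|_]; last exact: IHE.
by rewrite IHE // e12 -(IHE allE e.2) -eq_x2 IHE.
Qed.

Lemma refines_preim (pi : {set {set T}}) (f : T -> T) : partition pi [set: T] ->
  refines (preim_partition f [set: T]) pi =
  [forall x, forall y, (f x == f y) ==> (pblock pi x == pblock pi y)].
Proof.
move=> pi_part; have tI := partition_trivIset pi_part.
have pi_cover x : x \in cover pi by rewrite (cover_partition pi_part) inE.
apply/idP/idP.
  move=> /forall_inP sub_pi; apply/forallP=> x; apply/forallP=> y; apply/implyP=> /eqP fxy.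
  have /sub_pi /existsP[C /andP[Cpi sub]] :
      [set z in [set: T] | f x == f z] \in preim_partition f [set: T] by apply: imset_f.
  have xC : x \in C by apply: (subsetP sub); rewrite !inE eqxx.
  have yC : y \in C by apply: (subsetP sub); rewrite !inE fxy eqxx.
  by rewrite (def_pblock tI Cpi xC) (def_pblock tI Cpi yC).
move=> f_pi; apply/forall_inP=> _ /imsetP[x _ ->]; apply/existsP; exists (pblock pi x).
rewrite pblock_mem //=; apply/subsetP=> y; rewrite !inE /= => fxy.
by have := forallP (forallP f_pi x) y; rewrite fxy => /eqP ->; rewrite mem_pblock.
Qed.
End Labels.

Lemma prod_ffact_levels (s : nat) (T : finType) (lev : T -> 'I_s) (rk : T -> nat)
  (xs : 'I_s -> algC) :
  injective rk -> (forall a b, (lev a < lev b)%N -> (rk a < rk b)%N) ->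
  forall X : {set T},
  \prod_(a in X) (xs (lev a) - #|[set b in X | (rk b < rk a)%N]|%:R) =
  \prod_(i < s) ffact (xs i - #|[set b in X | (lev b < i)%N]|%:R)
                      #|[set b in X | lev b == i]|.
Proof.
move=> rk_inj rk_mono X.
rewrite (partition_big lev xpredT) //; apply: eq_bigr => i _.
set c := #|[set b in X | (lev b < i)%N]|; set Xi := [set b in X | lev b == i].
transitivity (\prod_(l < #|Xi|) (xs i - (c + l)%:R)); last first.
  by apply: eq_bigr => l _; rewrite natrD opprD addrA.
rewrite -(prod_rank (fun l => xs i - (c + l)%:R) rk_inj).
apply: eq_big => [a|a /andP[aX /eqP ai]]; first by rewrite inE.
subst i; congr (_ - _%:R).
have below_a : [set b in X | (rk b < rk a)%N] =
    [set b in X | (lev b < lev a)%N] :|: [set b in Xi | (rk b < rk a)%N].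
  apply/setP=> b; rewrite !inE; have [bX|] //= := boolP (b \in X).
  rewrite -val_eqE /=; case: (ltngtP (lev b) (lev a)) => [lt|gt|//] /=; first by rewrite rk_mono.
  by apply/negbTE; rewrite -leqNgt ltnW // rk_mono.
have disj : [set b in X | (lev b < lev a)%N] :&: [set b in Xi | (rk b < rk a)%N] = set0.
  apply/setP=> b; rewrite !inE -val_eqE /=; apply/negbTE.
  by case: (ltngtP (lev b) (lev a)); rewrite //= !andbF.
by rewrite below_a cardsU disj cards0 subn0.
Qed.

Section Atoms.
Variables (s r : nat) (k : 'I_r -> 'I_s -> nat).

Definition ktot : nat := (\sum_(j < r) \sum_(i < s) k j i)%N.

(* The atom (i, j, l) stands for the l-th unit of k j i; it is [active] when
   l < k j i.  The bound ktot.+1 on l only serves to make the type finite. *)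
Definition atom := ('I_s * 'I_r * 'I_ktot.+1)%type.
Definition lvl (a : atom) : 'I_s := a.1.1.
Definition idx (a : atom) : 'I_r := a.1.2.
Definition active (a : atom) : bool := (a.2 < k (idx a) (lvl a))%N.
Definition arank (a : atom) : nat := ((lvl a * r + idx a) * ktot.+1 + a.2)%N.
Definition atoms (B : {set 'I_r}) : {set atom} := [set a | active a && (idx a \in B)].

Lemma k_lt_ktot j i : (k j i < ktot.+1)%N.
Proof. by rewrite ltnS /ktot (bigD1 j) //= (bigD1 i) //= -addnA leq_addr. Qed.

Lemma arank_inj : injective arank.
Proof.
move=> [[i j] l] [[i' j'] l'] /=; rewrite /arank /lvl /idx /= => e.
have ll' : (l : nat) = l'.
  by move: (congr1 (modn^~ ktot.+1) e); rewrite !modnMDl !modn_small.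
have e1 : (i * r + j = i' * r + j')%N.
  by move: (congr1 (divn^~ ktot.+1) e); rewrite !divnMDl // !divn_small // !addn0.
have jj' : (j : nat) = j'.
  by move: (congr1 (modn^~ r) e1); rewrite !modnMDl !modn_small.
have ii' : (i : nat) = i'.
  have r_gt0 : (0 < r)%N by case: r j {e e1 jj'} => // -[].
  by move: (congr1 (divn^~ r) e1); rewrite !divnMDl // !divn_small // !addn0.
by congr (_, _, _); apply: val_inj.
Qed.

Lemma arank_mono a b : (lvl a < lvl b)%N -> (arank a < arank b)%N.
Proof.
rewrite /arank => lt_ab; have := ltn_ord a.2; have idx_lt := ltn_ord (idx a).
have : ((lvl a).+1 * r <= lvl b * r)%N by rewrite leq_mul2r lt_ab orbT.
rewrite mulSn => le_ab.
have : ((lvl a * r + idx a).+1 * ktot.+1 <= lvl b * r * ktot.+1)%N.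
  by rewrite leq_mul2r; apply/orP; right; lia.
nia.
Qed.

Lemma card_atoms_lvl_eq B i :
  #|[set a in atoms B | lvl a == i]| = (\sum_(j in B) k j i)%N.
Proof.
rewrite -sum1_card big_mkcond /=.
transitivity (\sum_(ij : 'I_s * 'I_r) \sum_(l : 'I_ktot.+1)
   (if [&& (l < k ij.2 ij.1)%N, ij.2 \in B & ij.1 == i] then 1 else 0))%N.
  rewrite pair_bigA; apply: eq_bigr => -[[i' j] l] _ /=.
  by rewrite !inE /active /lvl /idx /= andbA.
rewrite -(pair_bigA _ (fun i' j => \sum_(l : 'I_ktot.+1)
  (if [&& (l < k j i')%N, j \in B & i' == i] then 1 else 0))%N) /=.
rewrite (bigD1 i) //= [X in (_ + X)%N]big1 ?addn0; last first.
  move=> i' neq; apply: big1 => j _; apply: big1 => l _.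
  by rewrite (negbTE neq) !andbF.
rewrite [RHS]big_mkcond /=; apply: eq_bigr => j _.
rewrite eqxx; case: (j \in B) => /=; last by rewrite big1 //= => l _; rewrite andbF.
rewrite -big_mkcond /= (eq_bigl (fun l : 'I_ktot.+1 => (l < k j i)%N)); last first.
  by move=> l; rewrite andbT.
by rewrite (big_ord_narrow (ltnW (k_lt_ktot j i))) sum1_card card_ord.
Qed.

Lemma card_atoms_lvl_lt B i : #|[set a in atoms B | (lvl a < i)%N]| =
   (\sum_(i' < s | (i' < i)%N) \sum_(j in B) k j i')%N.
Proof.
rewrite -sum1_card (partition_big lvl (fun i' : 'I_s => (i' < i)%N)); last first.
  by move=> a; rewrite inE => /andP[].
apply: eq_bigr => i' lt_i'i; rewrite -card_atoms_lvl_eq -sum1_card.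
apply: eq_bigl => a; rewrite !inE.
by case: eqP => [->|]; rewrite ?lt_i'i ?andbT ?andbF.
Qed.

Lemma gffact_atoms (nv : 'I_s -> nat) (B : {set 'I_r}) :
  gffact nv (fun i => \sum_(j in B) k j i)%N =
  \prod_(a in atoms B) ((nv (lvl a))%:R - #|[set b in atoms B | (arank b < arank a)%N]|%:R).
Proof.
rewrite (prod_ffact_levels (fun i => (nv i)%:R) arank_inj arank_mono) /gffact.
by apply: eq_bigr => i _; rewrite card_atoms_lvl_eq card_atoms_lvl_lt.
Qed.

(* Expanding each factor n_i - #{earlier atoms of the block} of [gffact_atoms],
   an atom either picks n_i (choice None) or the -1 of an earlier atom b
   (choice Some b).  That b lies in the same block is not part of the weight
   but is imposed by [compat], so that the weight does not depend on pi. *)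
Definition choice_weight (nv : 'I_s -> nat) (a : atom) (c : option atom) : algC :=
  if active a then
    if c is Some b then (if active b && (arank b < arank a)%N then -1 else 0)
    else (nv (lvl a))%:R
  else (if c is Some _ then 0 else 1).

Definition weight (nv : 'I_s -> nat) (F : {ffun atom -> option atom}) : algC :=
  \prod_a choice_weight nv a (F a).

Definition choice_compat (pi : {set {set 'I_r}}) (a : atom) (c : option atom) : bool :=
  if c is Some b then pblock pi (idx a) == pblock pi (idx b) else true.

Definition compat (pi : {set {set 'I_r}}) (F : {ffun atom -> option atom}) : bool :=
  [forall a, choice_compat pi a (F a)].

Lemma sum_choice_weight nv pi a : Theta pi ->
  \sum_c choice_weight nv a c * (choice_compat pi a c)%:R =
  if active a then
    (nv (lvl a))%:R - #|[set b in atoms (pblock pi (idx a)) | (arank b < arank a)%N]|%:R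
  else 1.
Proof.
move=> pi_part; have tI := partition_trivIset pi_part.
have pi_cover x : x \in cover pi by rewrite (cover_partition pi_part) inE.
rewrite sum_option /choice_weight mulr1; case: (active a) => /=; last first.
  by rewrite big1 ?addr0 // => b _; rewrite mul0r.
congr (_ + _); rewrite -sum1_card natr_sum -sumrN [RHS]big_mkcond /=.
apply: eq_bigr => b _; rewrite !inE (eq_pblock _ tI (pi_cover _)).
by case: (active b); case: (idx b \in _); case: (arank b < arank a)%N;
  rewrite /= ?mulr0 ?mul0r ?mulr1 ?oppr0.
Qed.

Lemma prod_gffact_expand nv pi : Theta pi ->
  \prod_(B in pi) gffact nv (fun i => \sum_(j in B) k j i)%N =
  \sum_(F : {ffun atom -> option atom}) weight nv F * (compat pi F)%:R.
Proof.
move=> pi_part; symmetry.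
rewrite (eq_bigr (fun F : {ffun atom -> option atom} => \prod_a
    (choice_weight nv a (F a) * (choice_compat pi a (F a))%:R))); last first.
  by move=> F _; rewrite /weight /compat -(prod_nat_bool _ (fun a => _)) -big_split.
rewrite -(bigA_distr_bigA (fun a c => choice_weight nv a c * (choice_compat pi a c)%:R)) /=.
under eq_bigr => a _ do rewrite sum_choice_weight //.
rewrite -big_mkcond /= (partition_big (fun a => pblock pi (idx a)) (mem pi)) /=; last first.
  by move=> a _; apply: pblock_mem; rewrite (cover_partition pi_part) inE.
apply: eq_bigr => B Bpi; rewrite gffact_atoms.
apply: eq_big => [a|a /andP[_ /eqP <-]] //.
by rewrite !inE pblock_eq.
Qed.

Definition edges (F : {ffun atom -> option atom}) : seq ('I_r * 'I_r) :=
  pmap (fun a => omap (fun b => (idx a, idx b)) (F a)) (enum [set: atom]).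

Definition edge_partition (F : {ffun atom -> option atom}) : {set {set 'I_r}} :=
  preim_partition (labels (edges F)) [set: 'I_r].

Lemma edge_partition_Theta F : Theta (edge_partition F).
Proof. exact: preim_partitionP. Qed.

Lemma compat_edges pi F :
  compat pi F = all (fun e => pblock pi e.1 == pblock pi e.2) (edges F).
Proof.
apply/forallP/allP => [compatF e|edgesF a].
  rewrite mem_pmap => /mapP[a _]; case Fa: (F a) => [b|] //= [->].
  by have := compatF a; rewrite Fa.
rewrite /choice_compat; case Fa: (F a) => [b|] //.
apply: (edgesF (idx a, idx b)); rewrite mem_pmap; apply/mapP.
by exists a; rewrite ?mem_enum ?inE ?Fa.
Qed.

Lemma compat_refines pi F : Theta pi -> compat pi F = refines (edge_partition F) pi.
Proof.
move=> pi_part; rewrite refines_preim // compat_edges; apply/idP/idP.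
  move=> edgesF; apply/forallP=> x; apply/forallP=> y; apply/implyP=> /eqP lxy.
  by rewrite -(pblock_labels edgesF x) -(pblock_labels edgesF y) lxy.
move=> labels_pi; apply/allP=> e eE; have := forallP (forallP labels_pi e.1) e.2.
by rewrite (labels_edge eE) eqxx.
Qed.

Lemma card_edge_partition F : (r <= #|edge_partition F| + size (edges F))%N.
Proof. by rewrite /edge_partition card_preim_partition -{1}(card_ord r) card_labels. Qed.

Definition roots (F : {ffun atom -> option atom}) : nat :=
  #|[set a | active a && (F a == None)]|.

Lemma weight_real nv F : weight nv F \is Num.real.
Proof.
apply: rpred_prod => a _; rewrite /choice_weight.
case: (active a); case: (F a) => [b|]; rewrite ?realn ?rpred0 ?rpred1 //.
by case: (_ && _); rewrite ?rpredN ?rpred1 ?rpred0.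
Qed.

Lemma norm_weight_le nv n F : (forall i, (nv i <= n)%N) ->
  `|weight nv F| <= n%:R ^+ roots F.
Proof.
move=> nv_le; rewrite /weight normr_prod /roots -prodr_const [X in _ <= X]big_mkcond /=.
apply: ler_prod => a _; rewrite normr_ge0 inE /choice_weight.
case: (active a); case: (F a) => [b|] /=; rewrite ?normr0 ?normr1 ?ler01 ?lexx //.
  by case: (_ && _); rewrite ?normrN ?normr1 ?normr0 ?ler01 ?lexx.
by rewrite normr_nat ler_nat.
Qed.

Lemma weight_neq0_active nv F a : weight nv F != 0 -> F a != None -> active a.
Proof.
move=> nz; case Fa: (F a) => [b|] // _; apply: contraNT nz => inactive.
by rewrite /weight (bigD1 a) //= /choice_weight (negbTE inactive) Fa mul0r.
Qed.

Lemma size_edges F : size (edges F) = #|[set a | F a != None]|.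
Proof.
rewrite size_pmap -sum1_count big_enum_cond -sum1_card.
by apply: eq_bigl => a; rewrite !inE /=; case: (F a).
Qed.

Lemma card_active : #|[set a | active a]| = ktot.
Proof.
rewrite -sum1_card (partition_big lvl xpredT) //=.
transitivity (\sum_(i < s) \sum_(j < r) k j i)%N; last by rewrite /ktot exchange_big.
apply: eq_bigr => i _.
have -> : (\sum_(j < r) k j i = \sum_(j in [set: 'I_r]) k j i)%N.
  by apply: eq_bigl => j; rewrite inE.
rewrite -card_atoms_lvl_eq -sum1_card; apply: eq_bigl => a.
by rewrite !inE andbT.
Qed.

Lemma roots_edges_le nv F : weight nv F != 0 -> (roots F + size (edges F) <= ktot)%N.
Proof.
move=> nz; rewrite size_edges -[X in (_ <= X)%N]card_active /roots -cardsUI.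
have -> : [set a | active a && (F a == None)] :&: [set a | F a != None] = set0.
  by apply/setP=> a; rewrite !inE; case: (F a) => [b|] /=; rewrite ?andbF ?andbT.
rewrite cards0 addn0; apply: subset_leq_card; apply/subsetP=> a; rewrite !inE.
by case/orP=> [/andP[] //|]; exact: weight_neq0_active nz.
Qed.

Lemma norm_weight_le_exprz nv n F : (0 < n)%N -> (forall i, (nv i <= n)%N) ->
  `|weight nv F| <= n%:R ^ (ktot%:Z + #|edge_partition F|%:Z - r%:Z).
Proof.
move=> n_gt0 nv_le; have [->|nz] := eqVneq (weight nv F) 0.
  by rewrite normr0 exprz_ge0 ?ler0n.
have roots_le := roots_edges_le nz; have r_le := card_edge_partition F.
set p := #|edge_partition F| in r_le *.
have -> : ktot%:Z + p%:Z - r%:Z = (roots F + (ktot + p - r - roots F))%N by lia.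
rewrite -exprnP; apply: le_trans (norm_weight_le F nv_le) (ler_weXn2l _ (leq_addr _ _)).
by rewrite ler1n.
Qed.

Lemma falling_kappa_weights nv m (rho : Iirr (SymG m) -> algC) sigma :
  disjoint_supports sigma -> support_stable sigma ->
  falling_kappa k nv rho sigma =
  \sum_(F : {ffun atom -> option atom}) weight nv F * kappa_blocks rho sigma (edge_partition F).
Proof.
move=> sigma_disj sigma_stable; pose M C := Mrho rho (prodB sigma C).
have expand_pi pi : Theta pi ->
    mobius_top #|pi| * \prod_(B in pi) (gffact nv (fun i => \sum_(j in B) k j i)%N * M B) =
    \sum_(F : {ffun atom -> option atom})
      weight nv F * ((compat pi F)%:R * (mobius_top #|pi| * \prod_(C in pi) M C)).
  move=> pi_part; rewrite big_split /= prod_gffact_expand // mulr_suml mulr_sumr.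
  by apply: eq_bigr => F _; rewrite mulrCA -mulrA.
rewrite /falling_kappa cumE (eq_bigr _ expand_pi) exchange_big /=.
apply: eq_bigr => F _; rewrite -mulr_sumr.
rewrite kappa_blocks_refines ?edge_partition_Theta //; congr (_ * _).
rewrite [RHS]big_mkcondr /=; apply: eq_bigr => pi pi_part.
by rewrite (compat_refines F pi_part); case: refines; rewrite ?mul1r ?mul0r.
Qed.

Definition fcoef (nv : 'I_s -> nat) (pi : {set {set 'I_r}}) : algC :=
  \sum_(F : {ffun atom -> option atom} | edge_partition F == pi) weight nv F.

Lemma fcoef_real nv pi : fcoef nv pi \is Num.real.
Proof. by apply: rpred_sum => F _; apply: weight_real. Qed.

Lemma falling_kappa_fcoef nv m (rho : Iirr (SymG m) -> algC) sigma :
  disjoint_supports sigma -> support_stable sigma ->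
  falling_kappa k nv rho sigma =
  \sum_(pi | Theta pi) fcoef nv pi * kappa_blocks rho sigma pi.
Proof.
move=> sigma_disj sigma_stable; rewrite falling_kappa_weights //.
rewrite (partition_big edge_partition (@Theta r)) => [|F _]; last exact: edge_partition_Theta.
apply: eq_bigr => pi _; rewrite /fcoef mulr_suml.
by apply: eq_bigr => F /eqP ->.
Qed.

Lemma norm_fcoef_le nv n pi : (0 < n)%N -> (forall i, (nv i <= n)%N) ->
  `|fcoef nv pi| <= #|{ffun atom -> option atom}|%:R * n%:R ^ (ktot%:Z + #|pi|%:Z - r%:Z).
Proof.
move=> n_gt0 nv_le; apply: le_trans (ler_norm_sum _ _ _) _.
apply: (@le_trans _ _ (\sum_(F : {ffun atom -> option atom} | edge_partition F == pi)
    n%:R ^ (ktot%:Z + #|pi|%:Z - r%:Z))).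
  by apply: ler_sum => F /eqP <-; apply: norm_weight_le_exprz.
rewrite sumr_const mulr_natl ler_wpMn2l ?max_card //.
by rewrite exprz_ge0 ?ler0n.
Qed.
End Atoms.

Theorem mainTheorem8 (s r : nat) (hs : (1 <= s)%N) (hr : (1 <= r)%N)
  (k : 'I_r -> 'I_s -> nat) :
  exists f : ('I_s -> nat) -> {set {set 'I_r}} -> algC,
    (forall nv pi, nondecr nv -> Theta pi -> f nv pi \is Num.real) /\
    (forall nv, nondecr nv ->
      forall (m : nat) (rho : Iirr (SymG m) -> algC), is_prob rho ->
      forall sigma : 'I_r -> nat -> nat,
        (forall j, finitary (sigma j)) ->
        (forall i j, i != j -> forall x, in_supp (sigma i) x -> ~ in_supp (sigma j) x) ->
        falling_kappa k nv rho sigma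
        = \sum_(pi : {set {set 'I_r}} | Theta pi) f nv pi * kappa_blocks rho sigma pi) /\
    (forall pi, Theta pi ->
      let beta : int := (\sum_(j < r) \sum_(i < s) k j i)%:Z + #|pi|%:Z - r%:Z in
      exists (C : algC) (N : nat), forall (n : nat) (nv : 'I_s -> nat),
        (N <= n)%N -> nondecr nv -> (forall i, (nv i <= n)%N) ->
        `|f nv pi| <= C * (n%:R : algC) ^ beta).
Proof.
exists (fcoef k); split; [|split].
- by move=> nv pi _ _; apply: fcoef_real.
- move=> nv _ m rho _ sigma sigma_fin sigma_disj; apply: falling_kappa_fcoef.
    move=> i j x neq /eqP moved; apply/eqP/negPn/negP => /eqP.
    exact: sigma_disj neq x moved.
  move=> i x; apply: contra => /eqP fixed; apply/eqP.
  by case: (sigma_fin i) => /bij_inj inj _; apply: inj.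
- move=> pi _ /=; exists #|{ffun atom k -> option (atom k)}|%:R, 1%N.
  by move=> n nv n_gt0 _ nv_le; apply: norm_fcoef_le.
Qed.
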